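(* Let $R=k[x_1,\dots,x_n]$ be a polynomial ring over a field $k$, let $I$ be an unmixed monomial ideal of $R$, let $\mathbf a\in\mathbb{Z}^n$, and let $F\subseteq[n]$ with $G_{\mathbf a}\subseteq F$. Then $F\setminus G_{\mathbf a}$ is a facet of $\Delta_{\mathbf a}(I)$ if and only if $F\in\mathcal F(I)$ and $x^{\mathbf a_+}\notin I_F$.
   Context: An ideal is unmixed if every associated prime is a minimal prime. For $\mathbf a=(a_1,\dots,a_n)\in\mathbb{Z}^n$ write $x^{\mathbf a}=x_1^{a_1}\cdots x_n^{a_n}$, $G_{\mathbf a}=\{i\in[n]\mid a_i<0\}$ with $[n]=\{1,\dots,n\}$, and let $\mathbf a_+$ be obtained from $\mathbf a$ by replacing every negative coordinate by $0$. For $F\subseteq[n]$ let $R_F=R[x_i^{-1}\mid i\in F]$ and let $P_F$ be the ideal generated by the variables $x_i$ with $i\notin F$. The degree complex is $\Delta_{\mathbf a}(I)=\{F\setminus G_{\mathbf a} \mid G_{\mathbf a}\subseteq F\subseteq[n],\ x^{\mathbf a}\notin IR_F\}$, a simplicial complex on $[n]$. $\mathcal F(I)$ is the set of all $F\subseteq[n]$ such that $P_F$ is a minimal prime of $I$, and for $F\in\mathcal F(I)$, $I_F$ denotes the primary component of $I$ associated with $P_F$. *)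

From HB Require Import structures.
From mathcomp Require Import all_boot all_order all_algebra.
From mathcomp Require Export mpoly.
Set Implicit Arguments. Unset Strict Implicit. Unset Printing Implicit Defensive.
Import Order.TTheory GRing.Theory Num.Theory.
Local Open Scope ring_scope.

Section Defs.
Variables (k : fieldType) (n : nat).
Local Notation R := {mpoly k[n]}.

Definition is_ideal (I : R -> Prop) : Prop :=
  [/\ I 0, (forall p q, I p -> I q -> I (p + q)) & (forall r p, I p -> I (r * p))].

Definition monomial_ideal (I : R -> Prop) : Prop :=
  exists S : 'X_{1..n} -> Prop, forall p, I p <->
    exists r : seq (R * 'X_{1..n}),
      (forall x, x \in r -> S x.2) /\ p = \sum_(x <- r) x.1 * 'X_[x.2].

Definition prime_ideal (P : R -> Prop) : Prop :=
  [/\ is_ideal P, ~ P 1 & forall a b, P (a * b) -> P a \/ P b].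

Definition subideal (I J : R -> Prop) : Prop := forall p, I p -> J p.

Definition minimal_prime (I P : R -> Prop) : Prop :=
  [/\ prime_ideal P, subideal I P &
      forall Q, prime_ideal Q -> subideal I Q -> subideal Q P -> subideal P Q].

Definition associated_prime (I P : R -> Prop) : Prop :=
  prime_ideal P /\ exists f : R, forall g, P g <-> I (g * f).

Definition unmixed (I : R -> Prop) : Prop :=
  forall P, associated_prime I P -> minimal_prime I P.

Definition PF (F : {set 'I_n}) (p : R) : Prop :=
  exists c : 'I_n -> R, p = \sum_(i < n | i \notin F) c i * 'X_i.

Definition Gset (a : 'I_n -> int) : {set 'I_n} := [set i | a i < 0].
Definition aplus (a : 'I_n -> int) : 'X_{1..n} :=
  [multinom (if (a i < 0)%R then 0%N else absz (a i)) | i < n].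

(* x^a \in I R_F, where R_F = R[x_i^-1 | i in F] (meaningful when G_a \subseteq F):
   there is a monomial x^u with u supported on F such that x^(a+u) is a
   monomial of R lying in I (i.e. x^a = x^(a+u) / x^u with x^(a+u) in I). *)
Definition in_loc (I : R -> Prop) (F : {set 'I_n}) (a : 'I_n -> int) : Prop :=
  exists u : 'I_n -> nat,
    (forall i, i \notin F -> u i = 0%N) /\
    (forall i, 0 <= a i + (u i)%:Z) /\
    I 'X_[[multinom absz (a i + (u i)%:Z)%R | i < n]].

Definition degree_complex (I : R -> Prop) (a : 'I_n -> int) (H : {set 'I_n}) : Prop :=
  exists F : {set 'I_n},
    [/\ Gset a \subset F, H = F :\: Gset a & ~ in_loc I F a].

Definition is_facet (D : {set 'I_n} -> Prop) (H : {set 'I_n}) : Prop :=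
  D H /\ forall H', D H' -> H \subset H' -> H' = H.

Definition calF (I : R -> Prop) (F : {set 'I_n}) : Prop := minimal_prime I (PF F).

(* I_F : the primary component of I associated with the minimal prime P_F,
   i.e. the contraction of I R_{P_F} to R. *)
Definition IF (I : R -> Prop) (F : {set 'I_n}) (f : R) : Prop :=
  exists g : R, ~ PF F g /\ I (g * f).

End Defs.

From mathcomp Require Import all_boot all_order all_algebra.
From mathcomp Require Import mpoly.
From mathcomp Require Import zify.
From Stdlib Require Import Classical.
Set Implicit Arguments. Unset Strict Implicit. Unset Printing Implicit Defensive.
Import Order.TTheory GRing.Theory Num.Theory.
Local Open Scope ring_scope.

(* For G_a \subseteq F, x^a lies in I R_F exactly when x^(a_+) lies in
   I_F = {f | g f \in I for some g \notin P_F}, so the facets of Delta_a(I)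
   correspond to the maximal F with x^(a_+) \notin I_F.  If P_F is a minimal
   prime, any larger such F' has I \subseteq P_F' \subseteq P_F, hence F' = F.
   Conversely, at a facet F inverting one more variable x_j already puts
   x^(a_+) into I_F'; multiplying x^(a_+) by a maximal monomial x^c in the
   variables outside F keeping it out of I_F, and then by a common monomial
   in the variables of F, yields x^b with (I : x^b) = P_F.  So P_F is an
   associated prime, hence minimal since I is unmixed. *)

Lemma exists_maximal_mnm (n : nat) (P : 'X_{1..n} -> Prop) (B : nat) :
  P 0%MM -> (forall c, P c -> (mdeg c <= B)%N) ->
  exists2 c, P c & forall j, ~ P (c + U_(j))%MM.
Proof.
move=> P0 bounded; apply: NNPP => nomax.
have grow t : exists2 c, P c & (t <= mdeg c)%N.
  elim: t => [|t [c Pc le_t]]; first by exists 0%MM.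
  have [j Pcj] : exists j, P (c + U_(j))%MM.
    by apply: NNPP => h; apply: nomax; exists c => // j Pj; apply: h; exists j.
  by exists (c + U_(j))%MM; rewrite // mdegD mdeg1 addn1.
by have [c /bounded] := grow B.+1; rewrite leqNgt => /negP.
Qed.

Lemma subset_setDr (T : finType) (G A B : {set T}) :
  G \subset B -> A :\: G \subset B :\: G -> A \subset B.
Proof.
move=> GB /subset_trans/(_ (subsetDl _ _)); rewrite subDset => /subset_trans.
by apply; rewrite subUset GB subxx.
Qed.

Lemma ideal_sum (k : fieldType) (n : nat) (J : {mpoly k[n]} -> Prop)
    (T : Type) (r : seq T) (P : pred T) (f : T -> {mpoly k[n]}) :
  is_ideal J -> (forall i, P i -> J (f i)) -> J (\sum_(i <- r | P i) f i).
Proof. by case=> J0 JD _ Jf; elim/big_ind: _. Qed.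

Section VariableIdeals.
Variables (k : fieldType) (n : nat).
Local Notation R := {mpoly k[n]}.
Implicit Types (F : {set 'I_n}) (m w : 'X_{1..n}) (p g : R).

Definition supported_on F m : bool := [forall i, (i \notin F) ==> (m i == 0%N)].

Lemma supported_onP F m :
  reflect (forall i, i \notin F -> m i = 0%N) (supported_on F m).
Proof.
apply: (iffP forallP) => [h i iF|h i]; first by move: (h i); rewrite iF => /eqP.
by apply/implyP => /h ->.
Qed.

Lemma supported_onPn F m :
  reflect (exists2 i, i \notin F & m i != 0%N) (~~ supported_on F m).
Proof.
apply: (iffP forallPn) => [[i]|[i iF mi]]; last by exists i; rewrite negb_imply iF.
by rewrite negb_imply => /andP[]; exists i.
Qed.

Lemma supported_onD F m w :
  supported_on F m -> supported_on F w -> supported_on F (m + w)%MM.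
Proof.
move=> /supported_onP mF /supported_onP wF; apply/supported_onP => i iF.
by rewrite mnmDE mF ?wF.
Qed.

Lemma PF_ideal F : is_ideal (PF (k:=k) F).
Proof.
split.
- by exists (fun _ => 0); rewrite big1 // => i _; rewrite mul0r.
- move=> _ _ [c ->] [d ->]; exists (fun i => c i + d i).
  by rewrite -big_split; apply: eq_bigr => i _; rewrite mulrDl.
- move=> r _ [c ->]; exists (fun i => r * c i).
  by rewrite mulr_sumr; apply: eq_bigr => i _; rewrite mulrA.
Qed.

Lemma PFM F r p : PF F p -> PF F (r * p).
Proof. by case: (PF_ideal F) => _ _; apply. Qed.

Lemma PF_Xi F i : i \notin F -> PF (k:=k) F 'X_i.
Proof.
move=> iF; exists (fun j => if j == i then 1 else 0).
rewrite (bigD1 i) //= eqxx mul1r big1 ?addr0 // => j /andP [_ /negbTE ->].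
by rewrite mul0r.
Qed.

Lemma PF_X F m : ~~ supported_on F m -> PF (k:=k) F 'X_[m].
Proof.
case/supported_onPn => i iF mi.
have Uim : (U_(i) <= m)%MM.
  by apply/mnm_lepP => j; rewrite mnm1E; case: eqP => [<-|]; lia.
by rewrite -(submK Uim) mpolyXD; apply: PFM; apply: PF_Xi.
Qed.

Lemma PF_sub F F' : F \subset F' -> subideal (PF (k:=k) F') (PF F).
Proof.
move=> /subsetP FF' _ [c ->]; apply: ideal_sum (PF_ideal F) _ => i iF'.
by apply: PFM; apply: PF_Xi; apply: contra iF'; apply: FF'.
Qed.

Definition restrict_to F p : R :=
  comp_mpoly [tuple (if i \in F then 'X_i else 0) | i < n] p.

Lemma restrict_toX F m :
  restrict_to F 'X_[m] = if supported_on F m then 'X_[m] else 0.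
Proof.
rewrite /restrict_to comp_mpolyX; case: ifPn => [/supported_onP mF|].
  rewrite [RHS]mpolyXE_id; apply: eq_bigr => i _; rewrite tnth_mktuple.
  by case: ifPn => // /mF ->; rewrite !expr0.
case/supported_onPn => i iF mi.
rewrite (bigD1 i) //= tnth_mktuple (negbTE iF) expr0n.
by rewrite (negbTE mi) mul0r.
Qed.

Lemma PF_restrict F p : PF F p <-> restrict_to F p = 0.
Proof.
split=> [[c ->]|p0].
  rewrite /restrict_to rmorph_sum big1 // => i iF.
  have /negbTE Ui : ~~ supported_on F U_(i).
    by apply/supported_onPn; exists i; rewrite // mnm1E eqxx.
  by rewrite rmorphM /= -/(restrict_to F 'X_i) restrict_toX Ui mulr0.
rewrite -[p]subr0 -[X in _ - X]p0.
have -> : p - restrict_to F p =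
    \sum_(m <- msupp p) (p@_m *: 'X_[m] - restrict_to F (p@_m *: 'X_[m])).
  by rewrite sumrB -raddf_sum -mpolyE.
apply: ideal_sum (PF_ideal F) _ => m _.
rewrite /restrict_to comp_mpolyZ -/(restrict_to F 'X_[m]) restrict_toX -scalerBr.
case: ifPn => [_|mF]; first by rewrite subrr scaler0; case: (PF_ideal F).
by rewrite subr0 -mul_mpolyC; apply: PFM; apply: PF_X.
Qed.

Lemma PF_prime F : prime_ideal (PF (k:=k) F).
Proof.
split; first exact: PF_ideal.
- by move/PF_restrict; rewrite /restrict_to rmorph1; apply/eqP; apply: oner_neq0.
- move=> p q /PF_restrict; rewrite /restrict_to rmorphM /= => /eqP.
  by rewrite mulf_eq0 => /orP[] /eqP/PF_restrict; [left|right].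
Qed.

Lemma notPF_X F m : supported_on F m -> ~ PF (k:=k) F 'X_[m].
Proof.
move=> mF /PF_restrict; rewrite restrict_toX mF => /(congr1 (mcoeff m)).
by rewrite mcoeffX mcoeff0 eqxx => /eqP; rewrite oner_eq0.
Qed.

Lemma notPF_msupp F g : ~ PF F g -> exists2 w, w \in msupp g & supported_on F w.
Proof.
move=> gF; apply: NNPP => nw; apply: gF; rewrite (mpolyE g) big_seq.
apply: ideal_sum (PF_ideal F) _ => m mg; rewrite -mul_mpolyC; apply: PFM.
by apply: PF_X; apply/negP => mF; apply: nw; exists m.
Qed.

Lemma calF_maximal (I : R -> Prop) F F' :
  calF I F -> F \subset F' -> subideal I (PF F') -> F' = F.
Proof.
move=> [_ _ minF] FF' IF'; apply/eqP; rewrite eqEsubset FF' andbT.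
apply/subsetP => j jF'; apply: contraT => jF.
have /notPF_X[] : supported_on F' U_(j).
  by apply/supported_onP => i; rewrite mnm1E; case: eqP => // <-; rewrite jF'.
exact: minF (PF_prime F') IF' (PF_sub FF') _ (PF_Xi jF).
Qed.

End VariableIdeals.

Section MonomialIdeals.
Variables (k : fieldType) (n : nat).
Local Notation R := {mpoly k[n]}.
Implicit Types (F : {set 'I_n}) (m w c : 'X_{1..n}) (p g : R).
Variable I : R -> Prop.
Hypothesis monI : monomial_ideal I.

Lemma monomial_ideal_is_ideal : is_ideal I.
Proof.
have [S IS] := monI; split.
- by apply/IS; exists [::]; rewrite big_nil.
- move=> _ _ /IS [r1 [S1 ->]] /IS [r2 [S2 ->]]; apply/IS; exists (r1 ++ r2).
  split; last by rewrite big_cat.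
  by move=> x; rewrite mem_cat => /orP [/S1|/S2].
- move=> r _ /IS [r1 [S1 ->]]; apply/IS.
  exists [seq (r * x.1, x.2) | x <- r1]; split; first by move=> _ /mapP [x /S1 ? ->].
  by rewrite big_map mulr_sumr; apply: eq_bigr => x _; rewrite mulrA.
Qed.

Lemma monomial_idealM r p : I p -> I (r * p).
Proof. by case: monomial_ideal_is_ideal => _ _; apply. Qed.

Lemma monomial_ideal_msupp p m : I p -> m \in msupp p -> I 'X_[m].
Proof.
have [S IS] := monI; case/IS => r [rS ->] /msupp_sum_le /flattenP [_ /mapP [x xr ->]].
rewrite filter_predT in xr; rewrite (perm_mem (msuppMX _ _)) => /mapP [m' _ ->].
rewrite mpolyXD mulrC; apply: monomial_idealM; apply/IS; exists [:: (1, x.2)].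
by split; [move=> y; rewrite inE => /eqP -> /=; apply: rS | rewrite big_seq1 mul1r].
Qed.

Lemma monomial_ideal_le m m' : (m <= m')%MM -> I 'X_[m] -> I 'X_[m'].
Proof. by move=> /submK <- Im; rewrite mpolyXD; apply: monomial_idealM. Qed.

Lemma monomial_colon_notPF F g m :
  I (g * 'X_[m]) -> ~ PF F g -> exists2 w, supported_on F w & I 'X_[m + w].
Proof.
move=> Ig /notPF_msupp [w wg wF]; exists w => //.
apply: monomial_ideal_msupp Ig _.
by rewrite (perm_mem (msuppMX _ _)); apply/mapP; exists w.
Qed.

Lemma IF_X F m : IF I F 'X_[m] <-> exists2 w, supported_on F w & I 'X_[m + w].
Proof.
split=> [[g [gF Ig]]|[w wF Iw]]; first exact: monomial_colon_notPF Ig gF.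
by exists 'X_[w]; split; [apply: notPF_X | rewrite -mpolyXD addmC].
Qed.

Lemma subideal_PF_of_notIF F m : ~ IF I F 'X_[m] -> subideal I (PF F).
Proof.
move=> nIF p Ip; apply: NNPP => pF; apply: nIF; apply/IF_X.
have Ip1 : I (p * 'X_[0]) by rewrite mpolyX0 mulr1.
have [w wF] := monomial_colon_notPF Ip1 pF; rewrite add0m => Iw.
by exists w => //; apply: monomial_ideal_le Iw; apply: lem_addl.
Qed.

Lemma IF_setU1 F j m :
  IF I (j |: F) 'X_[m] -> exists e, forall c, (e <= c j)%N -> IF I F 'X_[m + c].
Proof.
case/IF_X => v /supported_onP vF Iv; exists (v j) => c le_vc; apply/IF_X.
exists [multinom if i \in F then v i else 0%N | i < n].
  by apply/supported_onP => i iF; rewrite mnmE (negbTE iF).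
apply: monomial_ideal_le Iv; apply/mnm_lepP => i; rewrite !mnmDE mnmE.
case: ifPn => iF; first lia.
case: (eqVneq i j) => [->|ij]; first lia.
by rewrite vF ?addn0 ?leq_addr // in_setU1 negb_or ij.
Qed.

Lemma IF_common_witness F (J : {set 'I_n}) (p : 'I_n -> 'X_{1..n}) :
  (forall j, j \in J -> IF I F 'X_[p j]) ->
  exists2 w, supported_on F w & forall j, j \in J -> I 'X_[p j + w].
Proof.
move=> IFJ.
have /fin_all_exists [wj wjP] :
    forall j, exists w, j \in J -> supported_on F w /\ I 'X_[p j + w].
  move=> j; case: (boolP (j \in J)) => jJ; last by exists 0%MM.
  by have [w wF Iw] := (IF_X F (p j)).1 (IFJ j jJ); exists w.
exists (\sum_(j in J) wj j)%MM.
  apply/supported_onP => i iF; rewrite mnm_sumE big1 // => j jJ.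
  by have [/supported_onP -> //] := wjP j jJ.
move=> j jJ; have [_ Iw] := wjP j jJ; apply: monomial_ideal_le Iw.
by apply/mnm_lepP => i; rewrite !mnmDE leq_add2l mnm_sumE (bigD1 j) //= leq_addr.
Qed.

Lemma associated_PF F b :
  (forall j, j \notin F -> I 'X_[b + U_(j)]) ->
  (forall w, supported_on F w -> ~ I 'X_[b + w]) ->
  associated_prime I (PF F).
Proof.
move=> Ib nIb; split; first exact: PF_prime.
exists 'X_[b] => g; split.
  case=> c ->; rewrite mulr_suml; apply: ideal_sum monomial_ideal_is_ideal _ => i iF.
  by rewrite -mulrA; apply: monomial_idealM; rewrite -mpolyXD addmC; apply: Ib.
move=> Ig; apply: NNPP => gF; have [w wF] := monomial_colon_notPF Ig gF.
exact: nIb.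
Qed.

Lemma associated_PF_of_IF F m :
  ~ IF I F 'X_[m] -> (forall j, j \notin F -> IF I (j |: F) 'X_[m]) ->
  associated_prime I (PF F).
Proof.
move=> nIF IFj.
have /fin_all_exists [e IFe] : forall j, exists e,
    j \notin F -> forall c, (e <= c j)%N -> IF I F 'X_[m + c].
  move=> j; case: (boolP (j \in F)) => jF; first by exists 0%N.
  by have [e IFe] := IF_setU1 (IFj j jF); exists e.
pose P c := supported_on (~: F) c /\ ~ IF I F 'X_[m + c].
have [c [cF nIFc] maxc] : exists2 c, P c & forall j, ~ P (c + U_(j))%MM.
  apply: (exists_maximal_mnm (B := \sum_j e j)).
    by split; [apply/supported_onP => i; rewrite mnm0E | rewrite addm0].
  move=> c [/supported_onP cF nIFc]; rewrite mdegE; apply: leq_sum => i _.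
  have [iF|iF] := boolP (i \in F); first by rewrite cF // inE iF.
  by apply: ltnW; rewrite ltnNge; apply: contra_notN nIFc; apply: IFe.
have [w wF Iw] : exists2 w, supported_on F w &
    forall j, j \in ~: F -> I 'X_[m + c + U_(j) + w].
  apply: IF_common_witness => j; rewrite inE => jF; apply: NNPP => nIFj.
  apply: (maxc j); split; last by rewrite addmA.
  apply/supported_onP => i; rewrite inE negbK => iF.
  rewrite mnmDE mnm1E (supported_onP _ _ cF) ?inE ?iF //.
  by case: eqP jF => // ->; rewrite iF.
apply: (associated_PF (b := m + c + w)%MM).
  by move=> j jF; rewrite -addmA [(w + _)%MM]addmC addmA; apply: Iw; rewrite inE.
move=> w' w'F Iww'; apply: nIFc; apply/IF_X.
by exists (w + w')%MM; [apply: supported_onD | rewrite addmA].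
Qed.

End MonomialIdeals.

Section DegreeComplex.
Variables (k : fieldType) (n : nat).
Variable I : {mpoly k[n]} -> Prop.
Variable a : 'I_n -> int.
Implicit Types (F : {set 'I_n}).

Lemma in_locE F : Gset a \subset F ->
  in_loc I F a <-> exists2 v, supported_on F v & I 'X_[aplus a + v].
Proof.
move=> /subsetP GF.
have aplusE i : aplus a i = if (a i < 0)%R then 0%N else absz (a i) by rewrite mnmE.
have a_nonneg i : i \notin F -> (a i < 0)%R = false.
  by move=> iF; apply/negbTE; have := contra (GF i) iF; rewrite inE.
split.
- case=> u [uF [a_u_pos Iu]].
  exists [multinom (absz (a i + (u i)%:Z)%R - aplus a i)%N | i < n].
    by apply/supported_onP => i iF; rewrite mnmE aplusE uF // a_nonneg //; lia.
  congr (I 'X_[_]): Iu; apply/mnmP => i; rewrite mnmDE !mnmE.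
  by have := a_u_pos i; case: ifP; lia.
- case=> v /supported_onP vF Iv.
  exists (fun i => if (a i < 0)%R then (absz (a i) + v i)%N else v i); split.
    by move=> i iF; rewrite a_nonneg // vF.
  split; first by move=> i; case: ifP; lia.
  congr (I 'X_[_]): Iv; apply/mnmP => i; rewrite mnmDE !mnmE; case: ifP; lia.
Qed.

Lemma in_loc_IF F : monomial_ideal I -> Gset a \subset F ->
  in_loc I F a <-> IF I F 'X_[aplus a].
Proof. by move=> monI GF; rewrite in_locE // IF_X. Qed.

Lemma is_facet_degree_complexE F : Gset a \subset F ->
  is_facet (degree_complex I a) (F :\: Gset a) <->
  ~ in_loc I F a /\ forall F', F \subset F' -> ~ in_loc I F' a -> F' = F.
Proof.
move=> GF; split=> [[[F0 [GF0 FF0 nlocF0]] maxF] | [nlocF maxF]].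
  have -> : F = F0.
    by apply/eqP; rewrite eqEsubset (subset_setDr GF0) ?FF0 // (subset_setDr GF) ?FF0.
  split=> // F' F0F' nlocF'; have GF' := subset_trans GF0 F0F'.
  have := maxF (F' :\: Gset a) (ex_intro _ F' (And3 GF' erefl nlocF')).
  rewrite FF0 => /(_ (setSD _ F0F')) E.
  by apply/eqP; rewrite eqEsubset F0F' (subset_setDr GF0) ?E.
split=> [|_ [F' [GF' -> nlocF']] FF']; first by exists F.
by rewrite (maxF F') // (subset_setDr GF').
Qed.

End DegreeComplex.

Theorem proposition1p6 (k : fieldType) (n : nat) (I : {mpoly k[n]} -> Prop)
    (HI : monomial_ideal I) (Hun : unmixed I)
    (a : 'I_n -> int) (F : {set 'I_n}) (HGF : Gset a \subset F) :
  is_facet (degree_complex I a) (F :\: Gset a) <->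
  (calF I F /\ ~ IF I F 'X_[aplus a]).
Proof.
rewrite is_facet_degree_complexE // in_loc_IF //.
split=> [[nIF maxF] | [calF_F nIF]]; split=> //.
  apply: Hun; apply: associated_PF_of_IF nIF _ => // j jF; apply: NNPP => nIFj.
  have GFj : Gset a \subset j |: F by apply: subset_trans HGF (subsetUr _ _).
  have nlocj : ~ in_loc I (j |: F) a by rewrite in_loc_IF.
  have /setP/(_ j) := maxF (j |: F) (subsetUr _ _) nlocj.
  by rewrite setU11 (negbTE jF).
move=> F' FF' nlocF'; have GF' := subset_trans HGF FF'.
have nIF' : ~ IF I F' 'X_[aplus a] by rewrite -in_loc_IF.
exact: calF_maximal calF_F FF' (subideal_PF_of_notIF HI nIF').
Qed.
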